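(* Let $\pi_3$ be the five-dimensional complex associative algebra with basis $e_1,\dots,e_5$ and nonzero products $e_1e_1=e_2$, $e_1e_2=e_2e_1=e_3$, $e_1e_4=e_5$, $e_4e_4=e_5$ (all other products of basis elements are zero). A linear operator on $\pi_3$ is a local derivation if and only if its matrix has the form $$\begin{pmatrix} b_{1,1} & 0 & 0 & 0 & 0 \\ b_{2,1} & 2b_{1,1} & 0 & 0 & 0 \\ b_{3,1} & b_{3,2} & 3b_{1,1} & b_{3,4} & 0 \\ 0 & 0 & 0 & b_{1,1} & 0 \\ b_{5,1} & 0 & 0 & b_{5,4} & 2b_{1,1} \end{pmatrix}$$ with $b_{1,1},b_{2,1},b_{3,1},b_{3,2},b_{3,4},b_{5,1},b_{5,4}\in\mathbb{C}$.
   Context: The matrix of a linear operator $T$ is taken with respect to the basis $e_1,\dots,e_5$, with the $j$-th column giving the coordinates of $T(e_j)$. A derivation of an algebra $A$ is a linear map $D$ with $D(xy)=D(x)y+xD(y)$ for all $x,y\in A$. A linear map $\nabla:A\to A$ is a local derivation if for every $x\in A$ there is a derivation $D_x$ of $A$ (depending on $x$) with $\nabla(x)=D_x(x)$. *)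

(* The complex numbers are modelled as R[i] = complex R for
   an arbitrary R : realType (any such R is isomorphic to the real numbers). *)
From HB Require Import structures.
From mathcomp Require Import all_boot all_order all_algebra.
From mathcomp Require Import reals.
From mathcomp Require Export complex.
Set Implicit Arguments. Unset Strict Implicit. Unset Printing Implicit Defensive.
Import Order.TTheory GRing.Theory Num.Theory.
Local Open Scope ring_scope.

Section Pi3.
Variable C : fieldType.

(* Coordinates w.r.t. e_1..e_5 (0-based index k stands for e_(k+1)). *)
Definition basis5 (k : nat) : 'cV[C]_5 := delta_mx (inord k) 0.

Definition pi3_table (i j : 'I_5) : 'cV[C]_5 :=
  match nat_of_ord i, nat_of_ord j with
  | 0, 0 => basis5 1
  | 0, 1 => basis5 2
  | 1, 0 => basis5 2
  | 0, 3 => basis5 4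
  | 3, 3 => basis5 4
  | _, _ => 0
  end.

Definition pi3_mul (x y : 'cV[C]_5) : 'cV[C]_5 :=
  \sum_(i < 5) \sum_(j < 5) (x i 0 * y j 0) *: pi3_table i j.

(* Linear operators are represented by their matrices (column j = T(e_j)),
   acting by T *m x. *)
Definition is_derivation (D : 'M[C]_5) : Prop :=
  forall x y : 'cV[C]_5,
    D *m pi3_mul x y = pi3_mul (D *m x) y + pi3_mul x (D *m y).

Definition is_local_derivation (T : 'M[C]_5) : Prop :=
  forall x : 'cV[C]_5, exists D : 'M[C]_5, is_derivation D /\ T *m x = D *m x.

Definition mx_of_rows (rows : seq (seq C)) : 'M[C]_5 :=
  \matrix_(i < 5, j < 5) nth 0 (nth [::] rows i) j.

End Pi3.

(* The derivation identity on the pairs (e4, e1), (e1, e1), (e1, e2), (e4, e4)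
   and (e1, e4) shows that the derivations of pi_3 are exactly the matrices
   [der_mx u1 u2 u3 v3 u5 v5]: the displayed pattern with the extra constraint
   b32 = 2 b21.  A local derivation agrees with some derivation on each e_j, so
   it vanishes wherever all derivations do; comparing it with derivations on
   e1 + e4, e2 + e4, e2 + e5 and e3 + e5 ties its diagonal to b11.
   Conversely, at a vector x the constraint b32 = 2 b21 is only felt through the
   term b32 x2 of the third coordinate: if x1 <> 0 the free entry u3 absorbs
   (b32 - 2 b21) x2, and if x1 = 0 one takes u2 = b32 / 2. *)

From HB Require Import structures.
From mathcomp Require Import all_boot all_order all_algebra.
From mathcomp Require Import reals complex ring.
Set Implicit Arguments. Unset Strict Implicit. Unset Printing Implicit Defensive.
Import GRing.Theory Num.Theory.
Local Open Scope ring_scope.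

Section Coordinates.
Variable C : fieldType.
Implicit Types (x y : 'cV[C]_5) (M : 'M[C]_5).

Definition vec5 (a0 a1 a2 a3 a4 : C) : 'cV[C]_5 :=
  \col_(i < 5) nth 0 [:: a0; a1; a2; a3; a4] i.

Lemma cV5_ext x y : (forall k, (k < 5)%N -> x (inord k) 0 = y (inord k) 0) -> x = y.
Proof.
move=> exy; apply/matrixP => i j; rewrite ord1.
by have := exy i (ltn_ord i); rewrite inord_val.
Qed.

Lemma mx5_ext M M' :
  (forall k l, (k < 5)%N -> (l < 5)%N -> M (inord k) (inord l) = M' (inord k) (inord l)) ->
  M = M'.
Proof.
move=> eMM'; apply/matrixP => i j.
by have := eMM' i j (ltn_ord i) (ltn_ord j); rewrite !inord_val.
Qed.

Lemma vec5_entry a0 a1 a2 a3 a4 k : (k < 5)%N ->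
  vec5 a0 a1 a2 a3 a4 (inord k) 0 = nth 0 [:: a0; a1; a2; a3; a4] k.
Proof. by move=> lt_k5; rewrite mxE inordK. Qed.

Lemma vec5_eta x :
  x = vec5 (x (inord 0) 0) (x (inord 1) 0) (x (inord 2) 0) (x (inord 3) 0) (x (inord 4) 0).
Proof. by apply: cV5_ext => -[|[|[|[|[|k]]]]] lt_k5; rewrite vec5_entry. Qed.

Lemma vec5_inj a0 a1 a2 a3 a4 b0 b1 b2 b3 b4 :
  vec5 a0 a1 a2 a3 a4 = vec5 b0 b1 b2 b3 b4 ->
  [/\ a0 = b0, a1 = b1, a2 = b2, a3 = b3 & a4 = b4].
Proof.
move/matrixP=> eab.
by split; [move: (eab (inord 0) 0) | move: (eab (inord 1) 0) | move: (eab (inord 2) 0)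
  | move: (eab (inord 3) 0) | move: (eab (inord 4) 0)]; rewrite !vec5_entry.
Qed.

Lemma vec5D a0 a1 a2 a3 a4 b0 b1 b2 b3 b4 :
  vec5 a0 a1 a2 a3 a4 + vec5 b0 b1 b2 b3 b4 = vec5 (a0 + b0) (a1 + b1) (a2 + b2) (a3 + b3) (a4 + b4).
Proof. by apply: cV5_ext => -[|[|[|[|[|k]]]]] lt_k5; rewrite mxE !vec5_entry. Qed.

Lemma vec5Z c a0 a1 a2 a3 a4 :
  c *: vec5 a0 a1 a2 a3 a4 = vec5 (c * a0) (c * a1) (c * a2) (c * a3) (c * a4).
Proof. by apply: cV5_ext => -[|[|[|[|[|k]]]]] lt_k5; rewrite mxE !vec5_entry. Qed.

Lemma col5E M j :
  col j M = vec5 (M (inord 0) j) (M (inord 1) j) (M (inord 2) j) (M (inord 3) j) (M (inord 4) j).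
Proof. by apply: cV5_ext => -[|[|[|[|[|k]]]]] lt_k5; rewrite mxE vec5_entry. Qed.

Lemma vec5_basis a0 a1 a2 a3 a4 :
  vec5 a0 a1 a2 a3 a4 = a0 *: basis5 C 0 + a1 *: basis5 C 1 + a2 *: basis5 C 2
                        + a3 *: basis5 C 3 + a4 *: basis5 C 4.
Proof.
apply: cV5_ext => k lt_k5; rewrite vec5_entry // !mxE -!val_eqE /= !inordK //.
by case: k lt_k5 => [|[|[|[|[|k]]]]] //= _; rewrite !mulr0 !mulr1 ?addr0 ?add0r.
Qed.

Lemma mulmx_vec5 M a0 a1 a2 a3 a4 :
  M *m vec5 a0 a1 a2 a3 a4 = a0 *: col (inord 0) M + a1 *: col (inord 1) M
    + a2 *: col (inord 2) M + a3 *: col (inord 3) M + a4 *: col (inord 4) M.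
Proof. by rewrite vec5_basis !mulmxDr -!scalemxAr !colE. Qed.

Lemma pi3_mul_vec5 a0 a1 a2 a3 a4 b0 b1 b2 b3 b4 :
  pi3_mul (vec5 a0 a1 a2 a3 a4) (vec5 b0 b1 b2 b3 b4) =
  vec5 0 (a0 * b0) (a0 * b1 + a1 * b0) 0 (a0 * b3 + a3 * b3).
Proof.
apply: cV5_ext => k lt_k5; rewrite /pi3_mul !big_ord_recl !big_ord0 /= !mxE -!val_eqE /= !inordK //.
by case: k lt_k5 => [|[|[|[|[|k]]]]] //= _; ring.
Qed.

Definition vec5E := (pi3_mul_vec5, mulmx_vec5, col5E, vec5Z, vec5D,
  mul0r, mulr0, mul1r, mulr1, add0r, addr0).

End Coordinates.

Section Derivations.
Variable C : fieldType.
Implicit Types (x : 'cV[C]_5) (D T : 'M[C]_5).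

Definition support_mx (b11 b21 b22 b31 b32 b33 b34 b44 b51 b54 b55 : C) : 'M[C]_5 :=
  mx_of_rows
    [:: [:: b11; 0; 0; 0; 0];
        [:: b21; b22; 0; 0; 0];
        [:: b31; b32; b33; b34; 0];
        [:: 0; 0; 0; b44; 0];
        [:: b51; 0; 0; b54; b55]].

Definition locder_mx (b11 b21 b31 b32 b34 b51 b54 : C) : 'M[C]_5 :=
  support_mx b11 b21 (2 * b11) b31 b32 (3 * b11) b34 b11 b51 b54 (2 * b11).

Definition der_mx (u1 u2 u3 v3 u5 v5 : C) : 'M[C]_5 :=
  locder_mx u1 u2 u3 (2 * u2) v3 u5 v5.

Lemma mx_of_rowsE (rows : seq (seq C)) k l : (k < 5)%N -> (l < 5)%N ->
  mx_of_rows rows (inord k) (inord l) = nth 0 (nth [::] rows k) l.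
Proof. by move=> lt_k5 lt_l5; rewrite mxE !inordK. Qed.

Lemma support_mx_mul b11 b21 b22 b31 b32 b33 b34 b44 b51 b54 b55 a0 a1 a2 a3 a4 :
  support_mx b11 b21 b22 b31 b32 b33 b34 b44 b51 b54 b55 *m vec5 a0 a1 a2 a3 a4 =
  vec5 (b11 * a0) (b21 * a0 + b22 * a1) (b31 * a0 + b32 * a1 + b33 * a2 + b34 * a3)
       (b44 * a3) (b51 * a0 + b54 * a3 + b55 * a4).
Proof. by rewrite mulmx_vec5 !col5E !vec5Z !vec5D !mx_of_rowsE //=; congr vec5; ring. Qed.

Lemma der_mx_is_derivation u1 u2 u3 v3 u5 v5 : is_derivation (der_mx u1 u2 u3 v3 u5 v5).
Proof.
move=> x y; rewrite (vec5_eta x) (vec5_eta y) pi3_mul_vec5 !support_mx_mul !pi3_mul_vec5.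
by rewrite vec5D; congr vec5; ring.
Qed.

Lemma derivation_der_mx D : is_derivation D ->
  exists u1 u2 u3 v3 u5 v5, D = der_mx u1 u2 u3 v3 u5 v5.
Proof.
move=> derD.
have := derD (vec5 0 0 0 1 0) (vec5 1 0 0 0 0).
rewrite !vec5E => /vec5_inj[_ /esym d03 /esym d13 _ /esym d30].
have := derD (vec5 1 0 0 0 0) (vec5 1 0 0 0 0).
rewrite !vec5E => /vec5_inj[d01 d11 d21 d31 d41].
have := derD (vec5 1 0 0 0 0) (vec5 0 1 0 0 0).
rewrite !vec5E => /vec5_inj[d02 d12 d22 d32 d42].
have := derD (vec5 0 0 0 1 0) (vec5 0 0 0 1 0).
rewrite !vec5E => /vec5_inj[d04 d14 d24 d34 d44'].
have := derD (vec5 1 0 0 0 0) (vec5 0 0 0 1 0).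
rewrite !vec5E => /vec5_inj[_ _ _ _ d44].
have d33 : D (inord 3) (inord 3) = D (inord 0) (inord 0).
  by move: d44'; rewrite d44 d03 d30 addr0 add0r => /addIr/esym.
exists (D (inord 0) (inord 0)), (D (inord 1) (inord 0)), (D (inord 2) (inord 0)),
  (D (inord 2) (inord 3)), (D (inord 4) (inord 0)), (D (inord 4) (inord 3)).
apply: mx5_ext => k l lt_k5 lt_l5; rewrite mx_of_rowsE //.
case: k lt_k5 => [|[|[|[|[|k]]]]] // _; case: l lt_l5 => [|[|[|[|[|l]]]]] //= _;
  rewrite ?(d01, d02, d03, d04, d11, d12, d13, d14, d21, d22, d24, d30, d31, d32, d33, d34,
            d41, d42, d44); ring.
Qed.

Lemma is_derivationP D :
  is_derivation D <-> exists u1 u2 u3 v3 u5 v5, D = der_mx u1 u2 u3 v3 u5 v5.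
Proof.
split; first exact: derivation_der_mx.
by case=> [u1 [u2 [u3 [v3 [u5 [v5 ->]]]]]]; apply: der_mx_is_derivation.
Qed.

Lemma local_derivation_der_mx T x : is_local_derivation T ->
  exists u1 u2 u3 v3 u5 v5, T *m x = der_mx u1 u2 u3 v3 u5 v5 *m x.
Proof.
move=> /(_ x)[_ [/is_derivationP[u1 [u2 [u3 [v3 [u5 [v5 ->]]]]]] eTx]].
by exists u1, u2, u3, v3, u5, v5.
Qed.

Lemma local_derivation_entry_eq0 T i j : is_local_derivation T ->
  (forall u1 u2 u3 v3 u5 v5, der_mx u1 u2 u3 v3 u5 v5 i j = 0) -> T i j = 0.
Proof.
move=> locT der_ij0; have [u1 [u2 [u3 [v3 [u5 [v5]]]]]] := local_derivation_der_mx (basis5 C j) locT.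
rewrite -(der_ij0 u1 u2 u3 v3 u5 v5).
(* Naming the derivation keeps [mxE] from unfolding it along with [col]. *)
set D := der_mx _ _ _ _ _ _.
by rewrite /basis5 inord_val -!colE => /colP/(_ i); rewrite !mxE.
Qed.

Lemma local_derivation_support T : is_local_derivation T ->
  exists b11 b21 b22 b31 b32 b33 b34 b44 b51 b54 b55,
    T = support_mx b11 b21 b22 b31 b32 b33 b34 b44 b51 b54 b55.
Proof.
move=> locT.
exists (T (inord 0) (inord 0)), (T (inord 1) (inord 0)), (T (inord 1) (inord 1)),
  (T (inord 2) (inord 0)), (T (inord 2) (inord 1)), (T (inord 2) (inord 2)),
  (T (inord 2) (inord 3)), (T (inord 3) (inord 3)), (T (inord 4) (inord 0)),
  (T (inord 4) (inord 3)), (T (inord 4) (inord 4)).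
apply: mx5_ext => k l lt_k5 lt_l5; rewrite mx_of_rowsE //.
case: k lt_k5 => [|[|[|[|[|k]]]]] // _; case: l lt_l5 => [|[|[|[|[|l]]]]] //= _;
  by apply: local_derivation_entry_eq0 => // *; rewrite mx_of_rowsE.
Qed.

Section LocalDerivations.
Hypothesis two_neq0 : (2 : C) != 0.

Lemma support_mx_local_diag b11 b21 b22 b31 b32 b33 b34 b44 b51 b54 b55 :
  is_local_derivation (support_mx b11 b21 b22 b31 b32 b33 b34 b44 b51 b54 b55) ->
  [/\ b22 = 2 * b11, b33 = 3 * b11, b44 = b11 & b55 = 2 * b11].
Proof.
move=> /local_derivation_der_mx locT.
have b44E : b44 = b11.
  have [? [? [? [? [? [?]]]]]] := locT (vec5 1 0 0 1 0).
  by rewrite !support_mx_mul !vec5E => /vec5_inj[-> _ _ -> _].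
have b22E : b22 = 2 * b44.
  have [? [? [? [? [? [?]]]]]] := locT (vec5 0 1 0 1 0).
  by rewrite !support_mx_mul !vec5E => /vec5_inj[_ -> _ -> _].
have b55E : b55 = b22.
  have [? [? [? [? [? [?]]]]]] := locT (vec5 0 1 0 0 1).
  by rewrite !support_mx_mul !vec5E => /vec5_inj[_ -> _ _ ->].
have b33E : 2 * b33 = 3 * b55.
  have [? [? [? [? [? [?]]]]]] := locT (vec5 0 0 1 0 1).
  by rewrite !support_mx_mul !vec5E => /vec5_inj[_ _ -> _ ->]; ring.
split; rewrite ?b55E ?b22E ?b44E //.
by apply: (mulfI two_neq0); rewrite b33E b55E b22E b44E; ring.
Qed.

Lemma locder_mx_is_local b11 b21 b31 b32 b34 b51 b54 :
  is_local_derivation (locder_mx b11 b21 b31 b32 b34 b51 b54).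
Proof.
move=> x; rewrite (vec5_eta x).
set x0 := x (inord 0) 0; set x1 := x (inord 1) 0.
have [x0_eq0 | x0_neq0] := eqVneq x0 0.
- exists (der_mx b11 (b32 / 2) b31 b34 b51 b54); split; first exact: der_mx_is_derivation.
  by rewrite x0_eq0 !support_mx_mul; congr vec5; field.
- exists (der_mx b11 b21 ((b31 * x0 + (b32 - 2 * b21) * x1) / x0) b34 b51 b54).
  split; first exact: der_mx_is_derivation.
  by rewrite !support_mx_mul; congr vec5; field.
Qed.

Lemma is_local_derivationP T : is_local_derivation T <->
  exists b11 b21 b31 b32 b34 b51 b54, T = locder_mx b11 b21 b31 b32 b34 b51 b54.
Proof.
split=> [locT | [b11 [b21 [b31 [b32 [b34 [b51 [b54 ->]]]]]]]]; last exact: locder_mx_is_local.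
have [b11 [b21 [b22 [b31 [b32 [b33 [b34 [b44 [b51 [b54 [b55 eT]]]]]]]]]]] :=
  local_derivation_support locT.
move: locT; rewrite eT => /support_mx_local_diag[-> -> -> ->].
by exists b11, b21, b31, b32, b34, b51, b54.
Qed.

End LocalDerivations.
End Derivations.

Theorem theorem5p4 (R : realType) (T : 'M[R[i]]_5) :
  is_local_derivation T <->
  exists b11 b21 b31 b32 b34 b51 b54 : R[i],
    T = mx_of_rows
          [:: [:: b11; 0; 0; 0; 0];
              [:: b21; 2 * b11; 0; 0; 0];
              [:: b31; b32; 3 * b11; b34; 0];
              [:: 0; 0; 0; b11; 0];
              [:: b51; 0; 0; b54; 2 * b11]].
Proof. by apply: is_local_derivationP; rewrite pnatr_eq0. Qed.
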